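(* Let $(e_n)_n$ be the canonical basis of $\ell^1(\mathbb{N})$. Let $\alpha(t)=t$ for $t\in[0,\tfrac12]$ and $\alpha(t)=1-t$ for $t\in[\tfrac12,1]$, and for $n\in\mathbb{N}$ let $S_n=\{te_1+\alpha(t)e_{n+1}: t\in[0,1]\}$, $x_n=(\tfrac12-\tfrac1{2^n})e_1$ and $x_\infty=\tfrac12 e_1$. Let \[ X=\bigcup_{n\ge1}\Big(\tfrac{1}{2^{n+1}}S_n+x_n\Big)\cup\{x_\infty\} \] with the metric $d$ inherited from the $\ell^1$ norm. Then $(X,d)$ is a compact, $2$-quasiconvex metric space that is not an eikonal space.
   Context: A metric space $(X,d)$ is $C$-quasiconvex ($C\ge1$) if $d_I\le C d$, where $d_I(x,y)$ is the infimum of lengths of continuous curves in $X$ from $x$ to $y$ (length of $\gamma:[0,T]\to X$ being $\sup\sum_i d(\gamma(t_i),\gamma(t_{i+1}))$ over partitions). Local slope: $s[u](\bar x):=\limsup_{x\to\bar x}\frac{\max\{u(\bar x)-u(x),0\}}{d(\bar x,x)}$ (zero if $\bar x$ isolated). For nonempty open $\Omega\subsetneq X$, bounded continuous $\ell:\Omega\to\mathbb{R}$, $g:\partial\Omega\to\mathbb{R}$ satisfy (CC) if for all $x,y\in\partial\Omega$, $g(x)-g(y)\le\inf\{\int_0^T\ell(\gamma(t))dt\}$ over $1$-Lipschitz $\gamma:[0,T]\to\overline\Omega$ with $\gamma(0)=y$, $\gamma(T)=x$, $\gamma((0,T))\subset\Omega$ ($\inf\emptyset=+\infty$). $(X,d)$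 is an eikonal space if for every nonempty open $\Omega\subsetneq X$ and every such $(\ell,g)$ with $\inf\ell>0$ satisfying (CC) there is a continuous $u:\overline\Omega\to\mathbb{R}$ with $s[u]=\ell$ on $\Omega$ (slope computed in $\overline\Omega$) and $u=g$ on $\partial\Omega$. *)

From Stdlib Require Import Reals Lra List.
From Stdlib Require Import ClassicalEpsilon.
From Coquelicot Require Import Coquelicot.
Open Scope R_scope.

Section Generic.
(* A metric space is given as a carrier predicate [Xs] inside an ambient type [T]
   together with a distance [d] (only its values on [Xs] matter). *)
Context {T : Type} (Xs : T -> Prop) (d : T -> T -> R).

Definition open_in (V : T -> Prop) : Prop :=
  (forall x, V x -> Xs x) /\
  (forall x, V x -> exists r, 0 < r /\ forall y, Xs y -> d x y < r -> V y).

Definition compact_sp : Prop :=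
  forall C : (T -> Prop) -> Prop,
    (forall V, C V -> open_in V) ->
    (forall x, Xs x -> exists V, C V /\ V x) ->
    exists l : list (T -> Prop),
      (forall V, In V l -> C V) /\ (forall x, Xs x -> exists V, In V l /\ V x).

Definition closure_in (A : T -> Prop) (x : T) : Prop :=
  Xs x /\ forall r, 0 < r -> exists y, A y /\ d x y < r.

Definition boundary_in (Om : T -> Prop) (x : T) : Prop :=
  closure_in Om x /\ ~ Om x.

Definition cont_on (A : T -> Prop) (f : T -> R) : Prop :=
  forall x, A x -> forall eps, 0 < eps ->
    exists delta, 0 < delta /\ forall y, A y -> d x y < delta -> Rabs (f x - f y) < eps.

Definition curve_cont (gam : R -> T) (Tm : R) : Prop :=
  forall s, 0 <= s <= Tm -> forall eps, 0 < eps ->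
    exists delta, 0 < delta /\ forall t, 0 <= t <= Tm -> Rabs (t - s) < delta ->
      d (gam s) (gam t) < eps.

Fixpoint psum (f : nat -> R) (n : nat) : R :=
  match n with O => 0 | S k => psum f k + f k end.

Definition is_partition (Tm : R) (n : nat) (p : nat -> R) : Prop :=
  p O = 0 /\ p n = Tm /\ (forall i, (i < n)%nat -> p i <= p (S i)).

Definition curve_length (gam : R -> T) (Tm : R) : Rbar :=
  Lub_Rbar (fun s => exists n p, is_partition Tm n p /\
     s = psum (fun i => d (gam (p i)) (gam (p (S i)))) n).

Definition d_intr (x y : T) : Rbar :=
  Rbar_glb (fun L => exists (gam : R -> T) (Tm : R), 0 <= Tm /\
     (forall t, 0 <= t <= Tm -> Xs (gam t)) /\ curve_cont gam Tm /\
     gam 0 = x /\ gam Tm = y /\ L = curve_length gam Tm).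

Definition quasiconvex (C : R) : Prop :=
  1 <= C /\ forall x y, Xs x -> Xs y -> Rbar_le (d_intr x y) (Finite (C * d x y)).

Definition isolated_in (A : T -> Prop) (xb : T) : Prop :=
  exists r, 0 < r /\ forall x, A x -> d xb x < r -> x = xb.

Definition slope (A : T -> Prop) (u : T -> R) (xb : T) : Rbar :=
  match excluded_middle_informative (isolated_in A xb) with
  | left _ => Finite 0
  | right _ =>
      Rbar_glb (fun v => exists r, 0 < r /\
        v = Lub_Rbar (fun w => exists x, A x /\ x <> xb /\ d xb x < r /\
              w = Rmax (u xb - u x) 0 / d xb x))
  end.

Definition compat_CC (Om : T -> Prop) (l g : T -> R) : Prop :=
  forall x y, boundary_in Om x -> boundary_in Om y ->
    forall (gam : R -> T) (Tm : R), 0 <= Tm ->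
      (forall s t, 0 <= s <= Tm -> 0 <= t <= Tm -> d (gam s) (gam t) <= Rabs (s - t)) ->
      (forall t, 0 <= t <= Tm -> closure_in Om (gam t)) ->
      gam 0 = y -> gam Tm = x ->
      (forall t, 0 < t < Tm -> Om (gam t)) ->
      g x - g y <= RInt (fun t => l (gam t)) 0 Tm.

Definition eikonal_space : Prop :=
  forall (Om : T -> Prop) (l g : T -> R),
    open_in Om -> (exists x, Om x) -> (exists x, Xs x /\ ~ Om x) ->
    (exists M, forall x, Om x -> Rabs (l x) <= M) ->
    cont_on Om l ->
    Rbar_lt (Finite 0) (Glb_Rbar (fun v => exists x, Om x /\ v = l x)) ->
    compat_CC Om l g ->
    exists u : T -> R,
      cont_on (closure_in Om) u /\
      (forall x, Om x -> slope (closure_in Om) u x = Finite (l x)) /\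
      (forall x, boundary_in Om x -> u x = g x).

End Generic.

(* The concrete space inside l^1(N): sequences nat -> R, e n the n-th basis vector
   (index 0 unused; e 1 is e_1). *)
Definition seqR := nat -> R.
Definition e (n : nat) : seqR := fun k => if Nat.eqb k n then 1 else 0.
Definition dl1 (x y : seqR) : R := Series (fun k => Rabs (x k - y k)).

Definition alpha (t : R) : R := if Rle_dec t (1/2) then t else 1 - t.

Definition xn (n : nat) : seqR := fun k => (1/2 - 1 / 2 ^ n) * e 1 k.
Definition xinf : seqR := fun k => 1/2 * e 1 k.

Definition Xspace (z : seqR) : Prop :=
  (exists n, (1 <= n)%nat /\ exists t, 0 <= t <= 1 /\
     z = (fun k => 1 / 2 ^ (n + 1) * (t * e 1 k + alpha t * e (n + 1) k) + xn n k))
  \/ z = xinf.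

(* Every point of X is [param s] for a unique s in [0, 1/2], its e_1-coordinate, and
   |s - t| <= d(param s, param t) <= 2 |s - t|: the other coordinates are tents of slope +-1
   with disjoint supports.  So X is a bi-Lipschitz image of an interval, hence compact and
   2-quasiconvex.  For Omega = X \ {param 0}, l = 1, g = 0, a solution u has slope 1 on Omega.
   Slope 1 gives arbitrarily close points where u drops by 3/4 of the distance; a minimum
   argument makes u o param nondecreasing, so these drops lie to the left, where the curve is
   steep (distance = twice the parameter gap), and u o param grows at rate 3/2 on [0, 1/2).
   But d(x_n, x_inf) = 1/2^n is just the parameter gap, so the slope at x_inf is at least
   3/2, not 1. *)

From Stdlib Require Import Reals Lra Lia Arith List ClassicalEpsilon FunctionalExtensionality.
From Coquelicot Require Import Coquelicot.
Open Scope R_scope.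

Lemma Rbar_glb_le_elem (E : Rbar -> Prop) (x : Rbar) : E x -> Rbar_le (Rbar_glb E) x.
Proof.
  intro Ex. unfold Rbar_glb. destruct (proj2_sig (Rbar_ex_glb E)) as [Hlb _]. now apply Hlb.
Qed.

Lemma Rbar_glb_ge_lower_bound (E : Rbar -> Prop) (b : Rbar) :
  Rbar_is_lower_bound E b -> Rbar_le b (Rbar_glb E).
Proof.
  intro Hb. unfold Rbar_glb. destruct (proj2_sig (Rbar_ex_glb E)) as [_ Hglb]. now apply Hglb.
Qed.

Section MetricFacts.

Context {T : Type} (Xs : T -> Prop) (d : T -> T -> R).

Lemma curve_length_le_lipschitz (gam : R -> T) (Tm L : R) :
  (forall s t, d (gam s) (gam t) <= L * Rabs (s - t)) ->
  Rbar_le (curve_length d gam Tm) (Finite (L * Tm)).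
Proof.
  intro Hlip. unfold curve_length.
  destruct (Lub_Rbar_correct (fun s => exists n p, is_partition Tm n p /\
     s = psum (fun i => d (gam (p i)) (gam (p (S i)))) n)) as [_ Hlub].
  apply Hlub. intros z [n [p [[Hp0 [Hpn Hpmono]] ->]]]. simpl.
  assert (Hsum : forall m, (m <= n)%nat ->
            psum (fun i => d (gam (p i)) (gam (p (S i)))) m <= L * (p m - p O)).
  { induction m as [|m IH]; intro Hm; simpl; [lra|].
    specialize (IH ltac:(lia)). specialize (Hpmono m ltac:(lia)).
    specialize (Hlip (p m) (p (S m))).
    rewrite Rabs_minus_sym, Rabs_right in Hlip by lra. lra. }
  specialize (Hsum n (le_n n)). rewrite Hpn, Hp0 in Hsum. lra.
Qed.

Lemma curve_cont_of_lipschitz (gam : R -> T) (Tm L : R) : 0 < L ->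
  (forall s t, d (gam s) (gam t) <= L * Rabs (s - t)) -> curve_cont d gam Tm.
Proof.
  intros HL Hlip s _ eps Heps. exists (eps / L). split; [now apply Rdiv_lt_0_compat|].
  intros t _ Hts. eapply Rle_lt_trans; [apply Hlip|].
  rewrite Rabs_minus_sym, Rmult_comm. now apply Rlt_div_r.
Qed.

Lemma quasiconvex_of_bilipschitz_param (f : R -> T) (a b C : R) :
  1 <= C ->
  (forall s, a <= s <= b -> Xs (f s)) ->
  (forall z, Xs z -> exists s, a <= s <= b /\ z = f s) ->
  (forall s t, Rabs (s - t) <= d (f s) (f t) <= C * Rabs (s - t)) ->
  quasiconvex Xs d C.
Proof.
  intros HC Hinto Honto Hbil. split; [exact HC|].
  intros x y Hx Hy.
  destruct (Honto x Hx) as [s [Hs ->]]. destruct (Honto y Hy) as [t [Ht ->]].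
  set (sg := if Rle_dec s t then 1 else -1).
  set (Tm := Rabs (t - s)).
  set (gam := fun tau => f (s + sg * tau)).
  assert (HsgTm : sg * Tm = t - s).
  { unfold sg, Tm. destruct Rle_dec; unfold Rabs; destruct Rcase_abs; lra. }
  assert (Hgam_lip : forall p q, d (gam p) (gam q) <= C * Rabs (p - q)).
  { intros p q. unfold gam.
    replace (Rabs (p - q)) with (Rabs (s + sg * p - (s + sg * q))).
    - apply Hbil.
    - replace (s + sg * p - (s + sg * q)) with (sg * (p - q)) by ring.
      rewrite Rabs_mult. unfold sg. destruct Rle_dec; rewrite ?Rabs_R1, ?Rabs_m1; lra. }
  apply Rbar_le_trans with (curve_length d gam Tm).
  - apply Rbar_glb_le_elem. exists gam, Tm.
    split; [apply Rabs_pos|]. split; [|split; [|split; [|split]]].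
    + intros tau Htau. apply Hinto. unfold Tm, sg in *.
      destruct Rle_dec; unfold Rabs in Htau; destruct Rcase_abs in Htau; lra.
    + apply (curve_cont_of_lipschitz _ _ C); [lra | exact Hgam_lip].
    + unfold gam. f_equal. ring.
    + unfold gam. rewrite HsgTm. f_equal. ring.
    + reflexivity.
  - eapply Rbar_le_trans; [apply curve_length_le_lipschitz; exact Hgam_lip|].
    simpl. pose proof (Hbil s t). unfold Tm. rewrite Rabs_minus_sym. nra.
Qed.

Lemma compact_sp_of_lipschitz_param (f : R -> T) (a b L : R) :
  0 < L ->
  (forall s, a <= s <= b -> Xs (f s)) ->
  (forall z, Xs z -> exists s, a <= s <= b /\ z = f s) ->
  (forall s t, d (f s) (f t) <= L * Rabs (s - t)) ->
  compact_sp Xs d.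
Proof.
  intros HL Hinto Honto Hlip C Hopen Hcover.
  assert (Hball : forall s : R, exists Vr : (T -> Prop) * R, a <= s <= b ->
     C (fst Vr) /\ 0 < snd Vr /\ forall y, Xs y -> d (f s) y < snd Vr -> fst Vr y).
  { intro s. destruct (classic (a <= s <= b)) as [Hs|Hs].
    - destruct (Hcover (f s) (Hinto s Hs)) as [V [HV HVs]].
      destruct (proj2 (Hopen V HV) _ HVs) as [r [Hr Hrball]].
      exists (V, r). intros _. auto.
    - exists ((fun _ => False), 1). intro. contradiction. }
  destruct (choice _ Hball) as [F HF].
  assert (Hdom : forall s : R, (exists t, a <= s <= b /\ Rabs (t - s) < snd (F s) / L) ->
                   a <= s <= b).
  { intros s [t [Hs _]]. exact Hs. }
  set (fam := mkfamily (fun s => a <= s <= b)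
                (fun s t => a <= s <= b /\ Rabs (t - s) < snd (F s) / L) Hdom).
  destruct (compact_P3 a b fam) as [D [Hsub Hfin]].
  - split.
    + intros s Hs. exists s. simpl. split; [exact Hs|].
      rewrite Rminus_diag, Rabs_R0. destruct (HF s Hs) as [_ [Hr _]].
      apply Rdiv_lt_0_compat; lra.
    + intros s t [Hs Hst].
      assert (Hgap : 0 < snd (F s) / L - Rabs (t - s)) by lra.
      exists (mkposreal _ Hgap). intros y Hy. unfold disc in Hy. simpl in Hy |- *.
      split; [exact Hs|].
      pose proof (Rabs_triang (y - t) (t - s)) as Htri.
      replace (y - t + (t - s)) with (y - s) in Htri by ring. lra.
  - destruct Hfin as [l Hl]. exists (map (fun s => fst (F s)) l). split.
    + intros V HV. apply in_map_iff in HV as [s [<- Hs]].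
      apply Hl in Hs as [Hs _]. apply (HF s Hs).
    + intros z Hz. destruct (Honto z Hz) as [t [Ht ->]].
      destruct (Hsub t Ht) as [s [[Hs Hst] HDs]].
      exists (fst (F s)). split.
      * apply (in_map (fun s => fst (F s))). apply Hl. split; assumption.
      * destruct (HF s Hs) as [_ [Hr HV]]. apply HV; [now apply Hinto|].
        eapply Rle_lt_trans; [apply Hlip|].
        rewrite Rabs_minus_sym, Rmult_comm. now apply Rlt_div_r.
Qed.

Lemma slope_lower_witness (A : T -> Prop) (u : T -> R) (xb : T) (l c : R) :
  slope d A u xb = Finite l -> 0 < c < l ->
  (forall x, A x -> x <> xb -> 0 < d xb x) ->
  forall r, 0 < r -> exists x, A x /\ x <> xb /\ d xb x < r /\ c * d xb x < u xb - u x.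
Proof.
  unfold slope. destruct (excluded_middle_informative _) as [_|_].
  { intros Hl Hc. injection Hl. lra. }
  intros Hglb Hc Hdpos r Hr.
  set (W := fun w => exists x, A x /\ x <> xb /\ d xb x < r /\
                       w = Rmax (u xb - u x) 0 / d xb x).
  assert (Hl_le : Rbar_le (Finite l) (Lub_Rbar W)).
  { rewrite <- Hglb. apply Rbar_glb_le_elem. exists r. split; auto. }
  destruct (classic (exists w, W w /\ c < w)) as [[w [[x [Ax [Hx [Hd ->]]]] Hw]]|Hnone].
  - exists x. repeat split; auto.
    pose proof (Hdpos x Ax Hx) as Hd0.
    assert (Hmax : c * d xb x < Rmax (u xb - u x) 0) by now apply Rlt_div_r.
    assert (0 < c * d xb x) by nra.
    unfold Rmax in Hmax. destruct Rle_dec; lra.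
  - exfalso. destruct (Lub_Rbar_correct W) as [_ Hlub].
    assert (Hub : Rbar_le (Lub_Rbar W) (Finite c)).
    { apply Hlub. intros w Hw. simpl. apply Rnot_lt_le. intro. apply Hnone. eauto. }
    pose proof (Rbar_le_trans _ _ _ Hl_le Hub) as Hcl. simpl in Hcl. lra.
Qed.

Lemma slope_upper_radius (A : T -> Prop) (u : T -> R) (xb : T) (l c : R) :
  slope d A u xb = Finite l -> l < c ->
  (forall x, A x -> x <> xb -> 0 < d xb x) ->
  exists r, 0 < r /\ forall x, A x -> x <> xb -> d xb x < r -> u xb - u x < c * d xb x.
Proof.
  unfold slope. destruct (excluded_middle_informative _) as [[r [Hr Hiso]]|_].
  { intros _ _ _. exists r. split; [exact Hr|]. intros x Ax Hx Hd.
    exfalso. exact (Hx (Hiso x Ax Hd)). }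
  intros Hglb Hc Hdpos.
  set (E := fun v => exists r, 0 < r /\ v = Lub_Rbar (fun w => exists x, A x /\ x <> xb /\
              d xb x < r /\ w = Rmax (u xb - u x) 0 / d xb x)).
  fold E in Hglb.
  destruct (classic (exists v, E v /\ Rbar_lt v (Finite c))) as [[v [[r [Hr ->]] Hv]]|Hnone].
  - exists r. split; [exact Hr|]. intros x Ax Hx Hd.
    destruct (Lub_Rbar_correct (fun w => exists x, A x /\ x <> xb /\ d xb x < r /\
              w = Rmax (u xb - u x) 0 / d xb x)) as [Hub _].
    pose proof (Hub (Rmax (u xb - u x) 0 / d xb x) ltac:(exists x; auto)) as Hw.
    assert (Hratio : Rmax (u xb - u x) 0 / d xb x < c).
    { destruct (Lub_Rbar _); simpl in *; try contradiction; lra. }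
    pose proof (Hdpos x Ax Hx) as Hd0.
    assert (Rmax (u xb - u x) 0 < c * d xb x) by now apply Rlt_div_l.
    pose proof (Rmax_l (u xb - u x) 0). lra.
  - exfalso. assert (Hlb : Rbar_is_lower_bound E (Finite c)).
    { intros v Hv. apply Rbar_not_lt_le. intro. apply Hnone. eauto. }
    pose proof (Rbar_glb_ge_lower_bound E _ Hlb) as Hcl. rewrite Hglb in Hcl. simpl in Hcl. lra.
Qed.

End MetricFacts.

Definition knot (n : nat) : R := 1/2 - 1/2^n.

Definition clamp (a b x : R) : R := Rmin (Rmax x a) b.

Definition tent (m : nat) (s : R) : R := Rmax 0 (Rmin (s - knot m) (knot (S m) - s)).

(* [knot n] is the e_1-coordinate of x_n.  [param s] is the point of X with e_1-coordinate s:
   its e_(m+1)-coordinate is the tent of slope +-1 over [knot m, knot (m+1)], the projection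
   of the m-th piece of X onto the e_1-axis. *)
Definition param (s : R) : seqR :=
  fun k => match k with O => 0 | S O => s | S m => tent m s end.

Lemma inv_pow2_pos (n : nat) : 0 < 1/2^n.
Proof. apply Rdiv_lt_0_compat; [lra | apply pow_lt; lra]. Qed.

Lemma inv_pow2_S (n : nat) : 1/2^(S n) = 1/2^n/2.
Proof. simpl. field. apply pow_nonzero. lra. Qed.

Lemma inv_pow2_lt (r : R) : 0 < r -> exists n, (1 <= n)%nat /\ 1/2^n < r.
Proof.
  intro Hr.
  destruct (pow_lt_1_zero (1/2) ltac:(rewrite Rabs_right; lra) r Hr) as [N HN].
  exists (S N). split; [lia|].
  specialize (HN (S N) ltac:(lia)). rewrite Rabs_right in HN by (apply Rle_ge, pow_le; lra).
  replace (1/2^S N) with ((1/2)^S N); [exact HN|].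
  rewrite Rdiv_1_l, pow_inv. lra.
Qed.

Lemma knot_S (n : nat) : knot (S n) = knot n + 1/2^(S n).
Proof. unfold knot. rewrite inv_pow2_S. lra. Qed.

Lemma knot_le (m n : nat) : (m <= n)%nat -> knot m <= knot n.
Proof.
  induction 1 as [|n _ IH]; [lra|]. rewrite knot_S. pose proof (inv_pow2_pos (S n)). lra.
Qed.

Lemma knot_le_S (m : nat) : knot m <= knot (S m).
Proof. apply knot_le. lia. Qed.

Lemma knot_lt_half (n : nat) : knot n < 1/2.
Proof. unfold knot. pose proof (inv_pow2_pos n). lra. Qed.

Lemma knot_1 : knot 1 = 0.
Proof. unfold knot. simpl. lra. Qed.

Lemma knot_nonneg (n : nat) : (1 <= n)%nat -> 0 <= knot n.
Proof. intro Hn. rewrite <- knot_1. now apply knot_le. Qed.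

Lemma knot_bracket (s : R) : 0 < s < 1/2 -> exists m, (1 <= m)%nat /\ knot m < s <= knot (S m).
Proof.
  intro Hs. destruct (inv_pow2_lt (1/2 - s) ltac:(lra)) as [N [_ HN]].
  assert (HsN : s <= knot N) by (unfold knot; lra). clear HN.
  induction N as [|N IH].
  - unfold knot in HsN. simpl in HsN. lra.
  - destruct (Rle_dec s (knot N)) as [HsN'|HNs]; [now apply IH|].
    destruct N as [|N]; [rewrite knot_1 in HsN; lra|].
    exists (S N). split; [lia | lra].
Qed.

Lemma tent_knot (m n : nat) : tent m (knot n) = 0.
Proof.
  unfold tent. pose proof (knot_le_S m).
  destruct (le_lt_dec n m) as [Hnm|Hmn].
  - pose proof (knot_le _ _ Hnm). unfold Rmax, Rmin; repeat destruct Rle_dec; lra.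
  - assert (Hmn' : (S m <= n)%nat) by lia. pose proof (knot_le _ _ Hmn').
    unfold Rmax, Rmin; repeat destruct Rle_dec; lra.
Qed.

Lemma tent_half (m : nat) : tent m (1/2) = 0.
Proof.
  unfold tent. pose proof (knot_lt_half (S m)).
  unfold Rmax, Rmin; repeat destruct Rle_dec; lra.
Qed.

Lemma tent_diff_le_clamp (m : nat) (s t : R) :
  Rabs (tent m s - tent m t) <=
  Rabs (clamp (knot m) (knot (S m)) s - clamp (knot m) (knot (S m)) t).
Proof.
  pose proof (knot_le_S m). unfold tent, clamp, Rmax, Rmin.
  repeat destruct Rle_dec; unfold Rabs; repeat destruct Rcase_abs; lra.
Qed.

Lemma clamp_le (a b x y : R) : a <= b -> x <= y -> clamp a b x <= clamp a b y.
Proof. intros. unfold clamp, Rmax, Rmin; repeat destruct Rle_dec; lra. Qed.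

Lemma psum_le (f g : nat -> R) (n : nat) : (forall i, f i <= g i) -> psum f n <= psum g n.
Proof. intro Hfg. induction n as [|n IH]; simpl; [lra|]. specialize (Hfg n). lra. Qed.

Lemma psum_minus (f g : nat -> R) (n : nat) :
  psum (fun i => f i - g i) n = psum f n - psum g n.
Proof. induction n as [|n IH]; simpl; [lra|]. rewrite IH. lra. Qed.

Lemma psum_nonneg (f : nat -> R) (n : nat) : (forall i, 0 <= f i) -> 0 <= psum f n.
Proof. intro Hf. induction n as [|n IH]; simpl; [lra|]. specialize (Hf n). lra. Qed.

Lemma psum_clamp_knots (x : R) (N : nat) :
  psum (fun m => clamp (knot (S m)) (knot (S (S m))) x - knot (S m)) N = clamp 0 (knot (S N)) x.
Proof.
  induction N as [|N IH]; simpl psum.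
  - rewrite knot_1. unfold clamp, Rmax, Rmin; repeat destruct Rle_dec; lra.
  - rewrite IH. pose proof (knot_nonneg (S N) ltac:(lia)). pose proof (knot_le_S (S N)).
    unfold clamp, Rmax, Rmin; repeat destruct Rle_dec; lra.
Qed.

(* Each tent varies no more than the clamp of s to its support, and these clamps telescope. *)
Lemma psum_tent_diff_le (s t : R) (N : nat) :
  psum (fun m => Rabs (tent (S m) s - tent (S m) t)) N <= Rabs (s - t).
Proof.
  assert (Hordered : forall s t, s <= t ->
            psum (fun m => Rabs (tent (S m) s - tent (S m) t)) N <= t - s).
  { clear s t. intros s t Hst. eapply Rle_trans.
    { apply psum_le with (g := fun m =>
        (clamp (knot (S m)) (knot (S (S m))) t - knot (S m))
        - (clamp (knot (S m)) (knot (S (S m))) s - knot (S m))).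
      intro i. eapply Rle_trans; [apply tent_diff_le_clamp|]. rewrite Rabs_minus_sym.
      pose proof (clamp_le _ _ s t (knot_le_S (S i)) Hst). rewrite Rabs_right; lra. }
    rewrite psum_minus, !psum_clamp_knots. pose proof (knot_nonneg (S N) ltac:(lia)).
    unfold clamp, Rmax, Rmin; repeat destruct Rle_dec; lra. }
  destruct (Rle_dec s t) as [Hst|Hts].
  - rewrite Rabs_minus_sym, Rabs_right by lra. now apply Hordered.
  - rewrite Rabs_right by lra. eapply Rle_trans; [|apply (Hordered t s); lra].
    apply psum_le. intro. rewrite Rabs_minus_sym. lra.
Qed.

Lemma Series_nonneg_between (a : nat -> R) (M : R) :
  (forall k, 0 <= a k) -> (forall N, sum_n a N <= M) ->
  forall N, sum_n a N <= Series a <= M.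
Proof.
  intros Ha HM N.
  assert (Hmono : forall n k, sum_n a n <= sum_n a (k + n)).
  { intros n k. induction k as [|k IH]; simpl; [lra|].
    rewrite sum_Sn. unfold plus; simpl. specialize (Ha (S (k + n))). lra. }
  assert (Hup : Rbar_le (Lim_seq (sum_n a)) (Lim_seq (fun _ => M))).
  { apply Lim_seq_le_loc. exists O. auto. }
  assert (Hlow : Rbar_le (Lim_seq (fun _ => sum_n a N)) (Lim_seq (sum_n a))).
  { apply Lim_seq_le_loc. exists N. intros n Hn.
    replace n with ((n - N) + N)%nat by lia. apply Hmono. }
  rewrite Lim_seq_const in Hup, Hlow. unfold Series.
  destruct (Lim_seq (sum_n a)); simpl in *; try contradiction; lra.
Qed.

Lemma sum_n_param_diff (s t : R) (N : nat) :
  sum_n (fun k => Rabs (param s k - param t k)) (S N)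
  = Rabs (s - t) + psum (fun m => Rabs (tent (S m) s - tent (S m) t)) N.
Proof.
  induction N as [|N IH].
  - rewrite sum_Sn, sum_O. unfold plus; simpl. rewrite Rminus_0_r, Rabs_R0. lra.
  - rewrite sum_Sn, IH. unfold plus; simpl. lra.
Qed.

Lemma sum_n_param_diff_0 (s t : R) : sum_n (fun k => Rabs (param s k - param t k)) O = 0.
Proof. rewrite sum_O. simpl. rewrite Rminus_0_r. apply Rabs_R0. Qed.

Lemma sum_n_param_diff_le (s t : R) (N : nat) :
  sum_n (fun k => Rabs (param s k - param t k)) N <= 2 * Rabs (s - t).
Proof.
  destruct N as [|N].
  - rewrite sum_n_param_diff_0. pose proof (Rabs_pos (s - t)). lra.
  - rewrite sum_n_param_diff. pose proof (psum_tent_diff_le s t N). lra.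
Qed.

Lemma dl1_param_bounds (s t : R) :
  Rabs (s - t) <= dl1 (param s) (param t) <= 2 * Rabs (s - t).
Proof.
  pose proof (Series_nonneg_between _ _ (fun k => Rabs_pos _) (sum_n_param_diff_le s t) 1) as Hser.
  unfold dl1. rewrite sum_n_param_diff in Hser. simpl psum in Hser. lra.
Qed.

Lemma dl1_param_flat (s t : R) :
  (forall m, tent m s = 0) -> (forall m, tent m t = 0) ->
  dl1 (param s) (param t) = Rabs (s - t).
Proof.
  intros Hs Ht.
  assert (Hpartial : forall N, sum_n (fun k => Rabs (param s k - param t k)) N <= Rabs (s - t)).
  { intros [|N].
    - rewrite sum_n_param_diff_0. apply Rabs_pos.
    - rewrite sum_n_param_diff.
      assert (Hzero : psum (fun m => Rabs (tent (S m) s - tent (S m) t)) N = 0).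
      { induction N as [|N IH]; simpl; [reflexivity|].
        rewrite IH, Hs, Ht, Rminus_0_r, Rabs_R0. lra. }
      lra. }
  pose proof (Series_nonneg_between _ _ (fun k => Rabs_pos _) Hpartial 1) as Hser.
  unfold dl1. rewrite sum_n_param_diff in Hser. simpl psum in Hser. lra.
Qed.

Lemma dl1_param_ge_tent (s t : R) (m : nat) : (1 <= m)%nat ->
  Rabs (s - t) + Rabs (tent m s - tent m t) <= dl1 (param s) (param t).
Proof.
  intro Hm. destruct m as [|m]; [lia|].
  pose proof (Series_nonneg_between _ _ (fun k => Rabs_pos _) (sum_n_param_diff_le s t)
                (S (S m))) as Hser.
  unfold dl1. rewrite sum_n_param_diff in Hser. simpl psum in Hser.
  pose proof (psum_nonneg (fun m => Rabs (tent (S m) s - tent (S m) t)) m (fun _ => Rabs_pos _)).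
  lra.
Qed.

(* Just left of s, the tent over [knot m, knot (m+1)] is affine with slope +-1. *)
Lemma dl1_param_left_steep (s : R) (m : nat) : (1 <= m)%nat -> knot m < s <= knot (S m) ->
  exists delta, 0 < delta /\
    forall t, s - delta < t <= s -> 2 * (s - t) <= dl1 (param s) (param t).
Proof.
  intros Hm Hs. set (mid := (knot m + knot (S m)) / 2).
  exists (if Rle_dec s mid then s - knot m else s - mid). split.
  { destruct Rle_dec; unfold mid in *; lra. }
  intros t Ht. pose proof (dl1_param_ge_tent s t m Hm) as Hge.
  assert (Htent : Rabs (tent m s - tent m t) = s - t).
  { unfold mid in Ht. unfold tent, Rmax, Rmin.
    destruct (Rle_dec s _); repeat destruct Rle_dec; unfold Rabs; repeat destruct Rcase_abs; lra. }
  rewrite Rabs_right in Hge by lra. lra.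
Qed.

Lemma Xspace_piece_param (n : nat) (t : R) : (1 <= n)%nat -> 0 <= t <= 1 ->
  (fun k => 1 / 2 ^ (n + 1) * (t * e 1 k + alpha t * e (n + 1) k) + xn n k)
  = param (knot n + t * (1 / 2 ^ (S n))).
Proof.
  intros Hn Ht. replace (n + 1)%nat with (S n) by lia.
  pose proof (inv_pow2_pos (S n)) as Hh. pose proof (knot_S n) as HS.
  apply functional_extensionality. intro k. unfold xn, e.
  destruct k as [|[|k]].
  - simpl. lra.
  - destruct n as [|n]; [lia|]. simpl Nat.eqb. cbv iota. unfold param, knot. lra.
  - destruct (Nat.eqb_spec (S k) n) as [E|E].
    + subst n. simpl Nat.eqb. rewrite Nat.eqb_refl. cbv iota. unfold param. cbv beta iota.
      unfold tent. rewrite HS. unfold alpha.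
      set (h := 1 / 2 ^ S (S k)) in *.
      destruct (Rle_dec t (1/2)); unfold Rmax, Rmin; repeat destruct Rle_dec; nra.
    + rewrite (proj2 (Nat.eqb_neq (S (S k)) (S n)) ltac:(lia)). simpl Nat.eqb. cbv iota.
      unfold param. cbv beta iota. unfold tent.
      destruct (le_lt_dec (S k) n) as [Hkn|Hnk].
      * assert (Hkn' : (S (S k) <= n)%nat) by lia. pose proof (knot_le _ _ Hkn').
        assert (0 <= t * (1 / 2 ^ S n)) by (apply Rmult_le_pos; lra).
        unfold Rmax, Rmin; repeat destruct Rle_dec; nra.
      * assert (Hnk' : (S n <= S k)%nat) by lia. pose proof (knot_le _ _ Hnk').
        assert (t * (1 / 2 ^ S n) <= 1/2^S n) by nra.
        unfold Rmax, Rmin; repeat destruct Rle_dec; nra.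
Qed.

Lemma param_half : param (1/2) = xinf.
Proof.
  apply functional_extensionality. intro k. unfold xinf, e.
  destruct k as [|[|k]]; simpl; try lra. rewrite tent_half. lra.
Qed.

Lemma param_inj (s t : R) : param s = param t -> s = t.
Proof. intro Heq. exact (f_equal (fun z => z 1%nat) Heq). Qed.

Lemma Xspace_param (s : R) : 0 <= s <= 1/2 -> Xspace (param s).
Proof.
  intro Hs. destruct (Req_dec s (1/2)) as [->|Hhalf]; [right; apply param_half|].
  left.
  assert (Hpiece : exists n, (1 <= n)%nat /\ knot n <= s <= knot (S n)).
  { destruct (Req_dec s 0) as [->|Hs0].
    - exists 1%nat. rewrite knot_1. pose proof (knot_nonneg 2 ltac:(lia)). split; [lia|lra].
    - destruct (knot_bracket s ltac:(lra)) as [m [Hm Hms]]. exists m. split; [exact Hm|lra]. }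
  destruct Hpiece as [n [Hn Hsn]].
  pose proof (inv_pow2_pos (S n)) as Hh. rewrite knot_S in Hsn.
  set (t := (s - knot n) / (1/2^(S n))).
  assert (Hts : t * (1/2^(S n)) = s - knot n).
  { unfold t, Rdiv at 1. rewrite Rmult_assoc, Rinv_l by lra. ring. }
  assert (Ht : 0 <= t <= 1).
  { split; apply Rmult_le_reg_r with (1/2^(S n)); lra. }
  exists n. split; [exact Hn|]. exists t. split; [exact Ht|].
  rewrite Xspace_piece_param by assumption. f_equal. lra.
Qed.

Lemma Xspace_param_inv (z : seqR) : Xspace z -> exists s, 0 <= s <= 1/2 /\ z = param s.
Proof.
  intros [[n [Hn [t [Ht ->]]]] | ->].
  - rewrite Xspace_piece_param by assumption. eexists; split; [|reflexivity].
    pose proof (knot_nonneg n Hn). pose proof (knot_S n). pose proof (knot_lt_half (S n)).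
    pose proof (inv_pow2_pos (S n)). split; nra.
  - exists (1/2). split; [lra|]. symmetry. apply param_half.
Qed.

Lemma dl1_param_pos (s t : R) : s <> t -> 0 < dl1 (param s) (param t).
Proof.
  intro Hst. pose proof (dl1_param_bounds s t). pose proof (Rabs_pos_lt (s - t) ltac:(lra)). lra.
Qed.

Lemma min_at_left_of_no_min_inside (g : R -> R) (a b : R) : a <= b ->
  (forall c, a <= c <= b -> continuity_pt g c) ->
  (forall s, a < s <= b -> exists t, a <= t <= b /\ g t < g s) ->
  forall s, a <= s <= b -> g a <= g s.
Proof.
  intros Hab Hcont Hdesc s Hs.
  destruct (continuity_ab_min g a b Hab Hcont) as [mn [Hmin Hmn]].
  destruct (Req_dec mn a) as [->|Hne]; [now apply Hmin|].
  destruct (Hdesc mn ltac:(lra)) as [t [Ht Hlt]].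
  specialize (Hmin t Ht). lra.
Qed.

Lemma Xspace_compact : compact_sp Xspace dl1.
Proof.
  apply (compact_sp_of_lipschitz_param Xspace dl1 param 0 (1/2) 2); [lra | exact Xspace_param
    | exact Xspace_param_inv | intros s t; apply dl1_param_bounds].
Qed.

Lemma Xspace_quasiconvex : quasiconvex Xspace dl1 2.
Proof.
  apply (quasiconvex_of_bilipschitz_param Xspace dl1 param 0 (1/2) 2); [lra | exact Xspace_param
    | exact Xspace_param_inv | exact dl1_param_bounds].
Qed.

Definition Omega (x : seqR) : Prop := exists s, 0 < s <= 1/2 /\ x = param s.

Lemma Omega_open : open_in Xspace dl1 Omega.
Proof.
  split.
  - intros x [s [Hs ->]]. apply Xspace_param. lra.
  - intros x [s [Hs ->]]. exists s. split; [lra|]. intros y Hy Hd.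
    destruct (Xspace_param_inv y Hy) as [t [Ht ->]]. exists t. split; [|reflexivity].
    pose proof (dl1_param_bounds s t). unfold Rabs in *. destruct Rcase_abs; lra.
Qed.

Lemma closure_Omega_param (s : R) : 0 <= s <= 1/2 -> closure_in Xspace dl1 Omega (param s).
Proof.
  intro Hs. split; [now apply Xspace_param|]. intros r Hr.
  set (t := Rmax s (Rmin (r/4) (1/2))).
  assert (Ht : 0 < t <= 1/2 /\ Rabs (s - t) < r/2).
  { unfold t, Rmax, Rmin. repeat destruct Rle_dec; unfold Rabs; destruct Rcase_abs; lra. }
  exists (param t). split.
  - exists t. split; [lra|reflexivity].
  - pose proof (dl1_param_bounds s t). lra.
Qed.

Lemma closure_Omega_inv (x : seqR) :
  closure_in Xspace dl1 Omega x -> exists s, 0 <= s <= 1/2 /\ x = param s.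
Proof. intros [Hx _]. now apply Xspace_param_inv. Qed.

Lemma dl1_closure_Omega_pos (s : R) (x : seqR) :
  closure_in Xspace dl1 Omega x -> x <> param s -> 0 < dl1 (param s) x.
Proof.
  intros Hx Hne. destruct (closure_Omega_inv x Hx) as [t [_ ->]].
  apply dl1_param_pos. intros ->. now apply Hne.
Qed.

Section UnitSlopeSolution.

Variable u : seqR -> R.
Hypothesis u_cont : cont_on dl1 (closure_in Xspace dl1 Omega) u.
Hypothesis u_slope : forall s, 0 < s <= 1/2 ->
  slope dl1 (closure_in Xspace dl1 Omega) u (param s) = Finite 1.

(* u o param, extended constantly outside [0, 1/2] so that [continuity_pt] applies. *)
Let u_clamped (s : R) : R := u (param (clamp 0 (1/2) s)).

Lemma u_clamped_param (s : R) : 0 <= s <= 1/2 -> u_clamped s = u (param s).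
Proof.
  intro Hs. unfold u_clamped, clamp. f_equal. f_equal.
  unfold Rmax, Rmin; repeat destruct Rle_dec; lra.
Qed.

Lemma u_clamped_continuous (c : R) : continuity_pt u_clamped c.
Proof.
  assert (Hrange : forall x, 0 <= clamp 0 (1/2) x <= 1/2).
  { intro x. unfold clamp, Rmax, Rmin; repeat destruct Rle_dec; lra. }
  assert (Hlip : forall x y, Rabs (clamp 0 (1/2) x - clamp 0 (1/2) y) <= Rabs (x - y)).
  { intros x y. unfold clamp, Rmax, Rmin.
    repeat destruct Rle_dec; unfold Rabs; repeat destruct Rcase_abs; lra. }
  intros eps Heps.
  destruct (u_cont _ (closure_Omega_param _ (Hrange c)) eps Heps) as [delta [Hdelta Hclose]].
  exists (delta / 3). split; [lra|]. intros y [_ Hy]. simpl in *. unfold Rdist in *.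
  unfold u_clamped. rewrite Rabs_minus_sym. apply Hclose; [apply closure_Omega_param, Hrange|].
  pose proof (dl1_param_bounds (clamp 0 (1/2) c) (clamp 0 (1/2) y)). pose proof (Hlip c y).
  rewrite Rabs_minus_sym in Hy. lra.
Qed.

Lemma u_param_descent (s r : R) : 0 < s <= 1/2 -> 0 < r ->
  exists t, 0 <= t <= 1/2 /\ t <> s /\ Rabs (t - s) < r /\
    3/4 * dl1 (param s) (param t) < u (param s) - u (param t).
Proof.
  intros Hs Hr.
  destruct (slope_lower_witness dl1 _ u _ 1 (3/4) (u_slope s Hs) ltac:(lra)
              (dl1_closure_Omega_pos s) r Hr) as [x [Hx [Hne [Hd Hdrop]]]].
  destruct (closure_Omega_inv x Hx) as [t [Ht ->]].
  assert (Hts : t <> s) by (intros ->; now apply Hne).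
  exists t. split; [exact Ht|]. split; [exact Hts|]. split; [|exact Hdrop].
  pose proof (dl1_param_bounds s t). rewrite Rabs_minus_sym. lra.
Qed.

Lemma u_param_nondecreasing (a b : R) : 0 <= a <= b -> b <= 1/2 -> u (param a) <= u (param b).
Proof.
  intros Hab Hb. rewrite <- (u_clamped_param a), <- (u_clamped_param b) by lra.
  apply (min_at_left_of_no_min_inside u_clamped a (1/2));
    [lra | intros; apply u_clamped_continuous | | lra].
  intros s Hs.
  destruct (u_param_descent s (s - a) ltac:(lra) ltac:(lra)) as [t [Ht [Hts [Hclose Hdrop]]]].
  exists t. split.
  - unfold Rabs in Hclose. destruct Rcase_abs in Hclose; lra.
  - rewrite !u_clamped_param by lra. pose proof (dl1_param_pos s t (not_eq_sym Hts)). lra.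
Qed.

(* Below 1/2 every descent direction of u is to the left, where the curve is steep. *)
Lemma u_param_growth (a b : R) : 0 <= a <= b -> b < 1/2 ->
  3/2 * (b - a) <= u (param b) - u (param a).
Proof.
  intros Hab Hb.
  set (g := fun s => u_clamped s - 3/2 * s).
  assert (Hmin : g a <= g b).
  { apply (min_at_left_of_no_min_inside g a b); [lra | | | lra].
    - intros c _. apply continuity_pt_minus; [apply u_clamped_continuous|].
      apply continuity_pt_scal, derivable_continuous_pt, derivable_pt_id.
    - intros s Hs.
      destruct (knot_bracket s ltac:(lra)) as [m [Hm Hsm]].
      destruct (dl1_param_left_steep s m Hm Hsm) as [delta [Hdelta Hsteep]].
      destruct (u_param_descent s (Rmin delta (s - a)) ltac:(lra)
                  ltac:(unfold Rmin; destruct Rle_dec; lra)) as [t [Ht [Hts [Hclose Hdrop]]]].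
      pose proof (dl1_param_pos s t (not_eq_sym Hts)).
      assert (Hleft : t < s).
      { destruct (Rlt_dec t s) as [Hlt|Hge]; [exact Hlt|].
        pose proof (u_param_nondecreasing s t ltac:(lra) ltac:(lra)). lra. }
      assert (Hnear : s - t < delta /\ s - t < s - a).
      { unfold Rmin in Hclose. destruct Rle_dec in Hclose;
        unfold Rabs in Hclose; destruct Rcase_abs in Hclose; lra. }
      exists t. split; [lra|]. specialize (Hsteep t ltac:(lra)).
      unfold g. rewrite !u_clamped_param by lra. lra. }
  unfold g in Hmin. rewrite !u_clamped_param in Hmin by lra. lra.
Qed.

(* Near x_inf, u drops by less than 5/4 of the distance; but x_n is at distance exactly
   1/2^n = 1/2 - knot n, and u already grows by 3/2 * 5/6 = 5/4 of it on the first 5/6 of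
   the arc from x_n. *)
Lemma unit_slope_solution_absurd : False.
Proof.
  destruct (slope_upper_radius dl1 _ u _ 1 (5/4) (u_slope (1/2) ltac:(lra)) ltac:(lra)
              (dl1_closure_Omega_pos (1/2))) as [r [Hr Hbound]].
  destruct (inv_pow2_lt r Hr) as [n [Hn Hnr]].
  pose proof (knot_nonneg n Hn). pose proof (knot_lt_half n).
  assert (Hdist : dl1 (param (1/2)) (param (knot n)) = 1/2^n).
  { rewrite dl1_param_flat by (intro; apply tent_half || apply tent_knot).
    unfold knot. rewrite Rabs_right; pose proof (inv_pow2_pos n); lra. }
  assert (Hne : param (knot n) <> param (1/2)) by (intro Heq; apply param_inj in Heq; lra).
  assert (Hnear : dl1 (param (1/2)) (param (knot n)) < r) by (rewrite Hdist; exact Hnr).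
  specialize (Hbound (param (knot n)) (closure_Omega_param (knot n) ltac:(lra)) Hne Hnear).
  set (b := knot n + 5/6 * (1/2 - knot n)).
  pose proof (u_param_growth (knot n) b ltac:(unfold b; lra) ltac:(unfold b; lra)).
  pose proof (u_param_nondecreasing b (1/2) ltac:(unfold b; lra) ltac:(lra)).
  rewrite Hdist in Hbound. unfold b, knot in *. lra.
Qed.

End UnitSlopeSolution.

Lemma Xspace_not_eikonal : ~ eikonal_space Xspace dl1.
Proof.
  intro Heik.
  destruct (Heik Omega (fun _ => 1) (fun _ => 0)) as [u [Hcont [Hslope _]]].
  - exact Omega_open.
  - exists (param (1/2)), (1/2). split; [lra|reflexivity].
  - exists (param 0). split; [apply Xspace_param; lra|].
    intros [s [Hs Heq]]. apply param_inj in Heq. lra.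
  - exists 1. intros. rewrite Rabs_R1. lra.
  - intros x _ eps Heps. exists 1. split; [lra|]. intros. rewrite Rminus_diag, Rabs_R0. exact Heps.
  - replace (Glb_Rbar (fun v => exists x, Omega x /\ v = 1)) with (Finite 1); [simpl; lra|].
    symmetry. apply is_glb_Rbar_unique. split.
    + intros v [x [_ ->]]. simpl. lra.
    + intros b Hb. apply Hb. exists (param (1/2)). split; [|reflexivity].
      exists (1/2). split; [lra|reflexivity].
  - intros x y _ _ gam Tm HTm _ _ _ _ _. rewrite RInt_const.
    unfold scal; simpl. unfold mult; simpl. lra.
  - apply (unit_slope_solution_absurd u Hcont). intros s Hs. apply Hslope. now exists s.
Qed.

Theorem proposition4p4 :
  compact_sp Xspace dl1 /\ quasiconvex Xspace dl1 2 /\ ~ eikonal_space Xspace dl1.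
Proof.
  split; [exact Xspace_compact|]. split; [exact Xspace_quasiconvex|]. exact Xspace_not_eikonal.
Qed.
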